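(* If $D_{15,14,6}$ is unsatisfiable, i.e., there is no packing $14$-coloring of $D_{15}$ that assigns color $6$ to the vertex $(0,0)$, then $\chi_\rho(\mathbb{Z}^2) \geq 15$.
   Context: $\mathbb{Z}^2$ denotes the graph with vertex set $\mathbb{Z}\times\mathbb{Z}$ and edges between points at $\ell_1$ distance $1$; its graph distance $d$ is the $\ell_1$ distance. A packing $k$-coloring of a graph $G=(V,E)$ is a function $f: V\to\{1,\ldots,k\}$ such that for any distinct $u,v\in V$ and any color $c$, $f(u)=f(v)=c$ implies $d(u,v)>c$. The packing chromatic number $\chi_\rho(G)$ is the least $k$ for which $G$ admits a packing $k$-coloring. For $r\ge 0$, $D_r$ is the subgraph of $\mathbb{Z}^2$ induced by $\{u \in \mathbb{Z}^2 : d(u,(0,0)) \le r\}$, with distances measured as $\ell_1$ distances. $D_{r,k,c}$ denotes the problem of deciding whether $D_r$ admits a packing $k$-coloring assigning color $c$ to $(0,0)$; it is called unsatisfiable if no such coloring exists. *)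

From Stdlib Require Import ZArith Lia.
Open Scope Z_scope.

(* l1 distance = graph distance of Z^2 *)
Definition dist (u v : Z * Z) : Z :=
  Z.abs (fst u - fst v) + Z.abs (snd u - snd v).

(* Values of f outside V are irrelevant. *)
Definition packing_coloring (V : Z * Z -> Prop) (k : nat) (f : Z * Z -> nat) : Prop :=
  (forall u, V u -> (1 <= f u)%nat /\ (f u <= k)%nat) /\
  (forall u v, V u -> V v -> u <> v -> f u = f v -> dist u v > Z.of_nat (f u)).

Definition Z2 : Z * Z -> Prop := fun _ => True.

Definition D (r : Z) : Z * Z -> Prop := fun u => dist u (0, 0) <= r.

Definition D_sat (r : Z) (k c : nat) : Prop :=
  exists f, packing_coloring (D r) k f /\ f (0, 0) = c.

From Stdlib Require Import ZArith Lia Classical.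

(* A packing coloring of the whole grid can be normalised so that the origin
   gets any prescribed admissible color c: if c is used at some vertex p,
   translate p to the origin; if c is not used at all, recolor the origin
   with c, which creates no conflict. Restricting the result to D_15 and
   allowing up to 14 colors would contradict the unsatisfiability of
   D_{15,14,6} whenever fewer than 15 colors suffice for Z^2. *)

Lemma packing_coloring_mono (V W : Z * Z -> Prop) (k k' : nat) (f : Z * Z -> nat) :
  (forall u, V u -> W u) -> (k <= k')%nat ->
  packing_coloring W k f -> packing_coloring V k' f.
Proof.
  intros HVW Hk [Hrange Hpack]; split.
  - intros u Hu; destruct (Hrange u (HVW u Hu)); lia.
  - intros u v Hu Hv; apply Hpack; auto.
Qed.

Definition translate (f : Z * Z -> nat) (p : Z * Z) : Z * Z -> nat :=
  fun u => f (fst u + fst p, snd u + snd p).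

Lemma dist_translate (u w p : Z * Z) :
  dist (fst u + fst p, snd u + snd p) (fst w + fst p, snd w + snd p) = dist u w.
Proof. unfold dist; simpl; f_equal; f_equal; lia. Qed.

Lemma packing_coloring_translate (V : Z * Z -> Prop) (k : nat) (f : Z * Z -> nat) (p : Z * Z) :
  packing_coloring V k f ->
  packing_coloring (fun u => V (fst u + fst p, snd u + snd p)) k (translate f p).
Proof.
  intros [Hrange Hpack]; split.
  - intros u Hu; exact (Hrange _ Hu).
  - intros u w Hu Hw Huw Hf; unfold translate in *.
    rewrite <- (dist_translate u w p).
    apply Hpack; auto.
    destruct u as [u1 u2], w as [w1 w2]; simpl.
    intros E; injection E; intros; apply Huw; f_equal; lia.
Qed.

Definition point_eq_dec (u v : Z * Z) : {u = v} + {u <> v}.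
Proof. decide equality; apply Z.eq_dec. Defined.

Definition recolor (f : Z * Z -> nat) (p : Z * Z) (c : nat) : Z * Z -> nat :=
  fun u => if point_eq_dec u p then c else f u.

Lemma packing_coloring_recolor (V : Z * Z -> Prop) (k : nat) (f : Z * Z -> nat)
    (p : Z * Z) (c : nat) :
  packing_coloring V k f -> (1 <= c <= k)%nat ->
  (forall u, V u -> u <> p -> f u <> c) ->
  packing_coloring V k (recolor f p c).
Proof.
  intros [Hrange Hpack] Hc Hfree; split.
  - intros u Hu; unfold recolor; destruct (point_eq_dec u p); auto.
  - intros u w Hu Hw Huw; unfold recolor.
    destruct (point_eq_dec u p) as [->|Hup], (point_eq_dec w p) as [->|Hwp].
    + contradiction.
    + intros E; exfalso; exact (Hfree w Hw Hwp (eq_sym E)).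
    + intros E; exfalso; exact (Hfree u Hu Hup E).
    + apply Hpack; auto.
Qed.

Lemma packing_coloring_Z2_center (k c : nat) (f : Z * Z -> nat) :
  packing_coloring Z2 k f -> (1 <= c <= k)%nat ->
  exists g, packing_coloring Z2 k g /\ g (0, 0) = c.
Proof.
  intros Hf Hc.
  destruct (classic (exists p, f p = c)) as [[p Hp]|Hunused].
  - exists (translate f p); split.
    + exact (packing_coloring_translate Z2 k f p Hf).
    + unfold translate; destruct p; exact Hp.
  - exists (recolor f (0, 0) c); split.
    + apply packing_coloring_recolor; auto.
      intros u _ _ Hu; apply Hunused; now exists u.
    + unfold recolor; destruct (point_eq_dec (0, 0) (0, 0)); congruence.
Qed.

Theorem lemma2 :
  ~ D_sat 15 14 6 ->
  forall (k : nat) (f : Z * Z -> nat), packing_coloring Z2 k f -> (15 <= k)%nat.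
Proof.
  intros Hunsat k f Hf.
  destruct (Nat.le_gt_cases 15 k) as [Hk|Hk]; [exact Hk|exfalso].
  assert (Hf14 : packing_coloring Z2 14 f).
  { apply (packing_coloring_mono Z2 Z2 k); auto; lia. }
  destruct (packing_coloring_Z2_center 14 6 f Hf14) as [g [Hg Hg0]]; [lia|].
  apply Hunsat; exists g; split; [|exact Hg0].
  apply (packing_coloring_mono (D 15) Z2 14); auto.
  intros; exact I.
Qed.
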